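(* Let $p$ be an odd prime and $G_1=\langle a\rangle+\langle b\rangle+\langle c\rangle$ the additively written group with $ap=bp=cp=0$, $a+b=b+a+c$, $c$ central; write elements as $x=ax_1+bx_2+cx_3$ ($0\le x_i<p$). For maps $\beta,\gamma\colon G_1\to\mathbb Z_p$ define $$x\cdot y=ax_1y_1+b(x_2y_1+\beta(x)y_2)+c\Big(-x_1x_2\tbinom{y_1}{2}+x_3y_1+\gamma(x)y_2+x_1\beta(x)y_3\Big).$$ Then each of the following choices of $(\beta,\gamma)$ occurs as the pair of maps of a local nearring $(G_1,+,\cdot)$ with identity $a$ (where $x\cdot b=b\beta(x)+c\gamma(x)$): 1) $\beta(x)=x_1^{\,i}$ and $\gamma(x)=0$, for $0<i<p$; 2) $\beta(x)=1$ and $\gamma(x)=0$; 3) $\beta(x)=x_1^2$ and $\gamma(x)=x_1x_2$.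
   Context: A (left) nearring is a set $R$ with operations $+,\cdot$ such that $(R,+)$ is a group, $(R,\cdot)$ a semigroup, and $x(y+z)=xy+xz$ for all $x,y,z$. A nearring with identity is local if its non-invertible elements form a subgroup of $(R,+)$. Additive notation: $gk$ is $g$ added $k$ times; coefficients are read modulo $p$. *)

From mathcomp Require Import all_boot all_order all_algebra.
Set Implicit Arguments. Unset Strict Implicit. Unset Printing Implicit Defensive.
Import GRing.Theory.
Local Open Scope ring_scope.

Section Nearring.
Variable T : Type.
Variables (add : T -> T -> T) (zero : T) (opp : T -> T) (mul : T -> T -> T).

Definition is_nearring : Prop :=
  [/\ associative add, left_id zero add, right_id zero add,
      left_inverse zero opp add & right_inverse zero opp add] /\
  associative mul /\
  (forall x y z, mul x (add y z) = add (mul x y) (mul x z)).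

Definition is_identity (e : T) : Prop := forall x, mul e x = x /\ mul x e = x.

Definition invertible (e x : T) : Prop := exists y, mul x y = e /\ mul y x = e.

Definition is_additive_subgroup (S : T -> Prop) : Prop :=
  [/\ S zero, (forall x y, S x -> S y -> S (add x y)) & (forall x, S x -> S (opp x))].

Definition is_local_nearring_with_identity (e : T) : Prop :=
  [/\ is_nearring, is_identity e & is_additive_subgroup (fun x => ~ invertible e x)].
End Nearring.

(* The group G_1: x = a x1 + b x2 + c x3 is encoded as ((x1, x2), x3). *)
Definition G1 (p : nat) : Type := ('F_p * 'F_p * 'F_p)%type.

Definition c1 {p} (x : G1 p) : 'F_p := x.1.1.
Definition c2 {p} (x : G1 p) : 'F_p := x.1.2.
Definition c3 {p} (x : G1 p) : 'F_p := x.2.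

Definition mkG {p} (x1 x2 x3 : 'F_p) : G1 p := ((x1, x2), x3).

(* Since b x2 + a y1 = a y1 + b x2 - c x2 y1 (from a + b = b + a + c, c central):
   x + y = a(x1+y1) + b(x2+y2) + c(x3+y3 - x2 y1). *)
Definition G1add {p} (x y : G1 p) : G1 p :=
  mkG (c1 x + c1 y) (c2 x + c2 y) (c3 x + c3 y - c2 x * c1 y).
Definition G1zero {p} : G1 p := mkG 0 0 0.
Definition G1opp {p} (x : G1 p) : G1 p :=
  mkG (- c1 x) (- c2 x) (- c3 x - c1 x * c2 x).
Definition G1a {p} : G1 p := mkG 1 0 0.

(* binom(y1, 2) read modulo p, with 0 <= y1 < p the representative *)
Definition G1mul {p} (beta gamma : G1 p -> 'F_p) (x y : G1 p) : G1 p :=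
  mkG (c1 x * c1 y)
      (c2 x * c1 y + beta x * c2 y)
      (- (c1 x * c2 x * ('C(nat_of_ord (c1 y), 2))%:R) + c3 x * c1 y
        + gamma x * c2 y + c1 x * beta x * c3 y).

Definition G1_local_nearring {p} (beta gamma : G1 p -> 'F_p) : Prop :=
  is_local_nearring_with_identity G1add G1zero G1opp (G1mul beta gamma) G1a.

(* The additive law of G_1 and left distributivity are polynomial identities in
   the coordinates once binom(y1, 2) is read as y1 (y1 - 1) / 2, which needs p
   odd.  Associativity reduces to two functional equations: beta is
   multiplicative and gamma (x y) = gamma x beta y + x1 beta x gamma y; the
   three choices of (beta, gamma) satisfy both.  Left multiplication by x is
   triangular in the coordinates, with diagonal x1, beta x, x1 beta x, hence
   bijective on the finite set G_1 when x1 <> 0; so the units are exactly the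
   x with x1 <> 0, and the non-units form the kernel of the homomorphism
   x |-> x1. *)
From mathcomp Require Import all_boot all_order all_algebra.
From mathcomp Require Import ring.
Set Implicit Arguments.
Unset Strict Implicit.
Unset Printing Implicit Defensive.
Import GRing.Theory.
Local Open Scope ring_scope.

Lemma natr_bin2 (R : comNzRingType) (n : nat) :
  'C(n, 2)%:R * 2 = n%:R * (n%:R - 1) :> R.
Proof.
elim: n => [|n IHn]; first by rewrite bin0n !mul0r.
by rewrite binS bin1 natrD mulrDl IHn -addn1 natrD; ring.
Qed.

Ltac G1_coords :=
  rewrite /G1mul /G1add /G1opp /G1zero /G1a /mkG /c1 /c2 /c3 /=;
  congr ((_, _), _).

Lemma G1_zmod_axioms (p : nat) :
  [/\ associative (@G1add p), left_id (@G1zero p) G1add,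
      right_id (@G1zero p) G1add, left_inverse (@G1zero p) G1opp G1add &
      right_inverse (@G1zero p) G1opp G1add].
Proof.
split.
- by move=> [[x1 x2] x3] [[y1 y2] y3] [[z1 z2] z3]; G1_coords; ring.
- by move=> [[x1 x2] x3]; G1_coords; ring.
- by move=> [[x1 x2] x3]; G1_coords; ring.
- by move=> [[x1 x2] x3]; G1_coords; ring.
- by move=> [[x1 x2] x3]; G1_coords; ring.
Qed.

Lemma c1_kernel_subgroup (p : nat) (S : G1 p -> Prop) :
  (forall x, S x <-> c1 x = 0) -> is_additive_subgroup G1add G1zero G1opp S.
Proof.
move=> SE; split.
- exact/SE.
- move=> x y /SE x1_eq0 /SE y1_eq0; apply/SE.
  by rewrite /c1 /= x1_eq0 y1_eq0 addr0.
- by move=> x /SE x1_eq0; apply/SE; rewrite /c1 /= x1_eq0 oppr0.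
Qed.

Section G1Nearring.
Variable p : nat.
Hypotheses (p_prime : prime p) (p_odd : odd p).

Lemma Fp_two_neq0 : (2 : 'F_p) != 0.
Proof.
rewrite -[2]/(2%:R) -(dvdn_pcharf (pchar_Fp p_prime)).
apply/negP => /(dvdn_leq (isT : (0 < 2)%N)).
by move: (prime_gt1 p_prime) p_odd; case: p => [|[|[|]]].
Qed.

Lemma Fp_bin2 (y : 'F_p) : 'C(y, 2)%:R = y * (y - 1) / 2 :> 'F_p.
Proof.
by rewrite -[in RHS](natr_Zp y) -natr_bin2 mulfK // Fp_two_neq0.
Qed.

Variables beta gamma : G1 p -> 'F_p.
Local Notation mul := (G1mul beta gamma).

Lemma G1mul_addr (x y z : G1 p) : mul x (G1add y z) = G1add (mul x y) (mul x z).
Proof.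
rewrite /G1mul !Fp_bin2.
move: x y z => [[x1 x2] x3] [[y1 y2] y3] [[z1 z2] z3].
by G1_coords; field; rewrite ?Fp_two_neq0.
Qed.

Lemma G1mul_assoc :
  (forall x y, beta (mul x y) = beta x * beta y) ->
  (forall x y, gamma (mul x y) = gamma x * beta y + c1 x * beta x * gamma y) ->
  associative mul.
Proof.
move=> + + x y z; rewrite /G1mul => betaM gammaM; rewrite betaM gammaM !Fp_bin2.
move: x y z => [[x1 x2] x3] [[y1 y2] y3] [[z1 z2] z3].
by G1_coords; field; rewrite ?Fp_two_neq0.
Qed.

Lemma G1a_identity : beta G1a = 1 -> gamma G1a = 0 -> is_identity mul G1a.
Proof.
move=> beta_a gamma_a [[x1 x2] x3].
rewrite /G1mul beta_a gamma_a !Fp_bin2.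
by split; G1_coords; field; rewrite ?Fp_two_neq0.
Qed.

Lemma G1mul_inj (x : G1 p) : c1 x != 0 -> beta x != 0 -> injective (mul x).
Proof.
case: x => [[x1 x2] x3]; rewrite /c1 /= => x1_neq0 betax_neq0.
move=> [[y1 y2] y3] [[z1 z2] z3] eq_xy_xz.
have e1 := congr1 c1 eq_xy_xz; have e2 := congr1 c2 eq_xy_xz.
have e3 := congr1 c3 eq_xy_xz; rewrite /G1mul /mkG /c1 /c2 /c3 /= in e1 e2 e3.
move/(mulfI x1_neq0): e1 => ?; subst z1.
move/addrI/(mulfI betax_neq0): e2 => ?; subst z2.
by move/addrI/(mulfI (mulf_neq0 x1_neq0 betax_neq0)): e3 => ->.
Qed.

Lemma c1_mul_eq1 (x y : G1 p) : mul x y = G1a -> c1 x != 0 /\ c1 y != 0.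
Proof.
move=> xy_eq_a; have xy1 : c1 x * c1 y = 1 := congr1 c1 xy_eq_a.
by apply/andP; rewrite -negb_or -mulf_eq0 xy1 oner_eq0.
Qed.

Section Units.
Hypotheses (mul_assoc : associative mul) (a_identity : is_identity mul G1a).
Hypothesis beta_neq0 : forall x, c1 x != 0 -> beta x != 0.

Lemma G1mul_rinv (x : G1 p) : c1 x != 0 -> exists y, mul x y = G1a.
Proof.
move=> x1_neq0; have inj_x := G1mul_inj x1_neq0 (beta_neq0 x1_neq0).
by have /codomP[y ->] := inj_card_onto inj_x (leqnn _) G1a; exists y.
Qed.

Lemma G1_invertibleE (x : G1 p) : invertible mul G1a x <-> c1 x != 0.
Proof.
split=> [[y [/c1_mul_eq1[]]] //|x1_neq0].
have [y xy1] := G1mul_rinv x1_neq0.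
have [_ /G1mul_rinv[z yz1]] := c1_mul_eq1 xy1.
have x_eq_z : x = z.
  by rewrite -(proj2 (a_identity x)) -yz1 mul_assoc xy1 (proj1 (a_identity z)).
by exists y; split; last rewrite x_eq_z.
Qed.

Lemma G1_local_nearring_of_monoid : G1_local_nearring beta gamma.
Proof.
split.
- split; first exact: G1_zmod_axioms.
  by split; [exact: mul_assoc | exact: G1mul_addr].
- exact: a_identity.
- apply: c1_kernel_subgroup => x; rewrite G1_invertibleE.
  by split=> [/negP/negbNE/eqP|->]; rewrite ?eqxx.
Qed.

End Units.

Lemma G1_local_nearring_criterion :
  (forall x y, beta (mul x y) = beta x * beta y) ->
  (forall x y, gamma (mul x y) = gamma x * beta y + c1 x * beta x * gamma y) ->
  beta G1a = 1 -> gamma G1a = 0 -> (forall x, c1 x != 0 -> beta x != 0) ->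
  G1_local_nearring beta gamma.
Proof.
move=> betaM gammaM beta_a gamma_a.
exact: G1_local_nearring_of_monoid (G1mul_assoc betaM gammaM)
         (G1a_identity beta_a gamma_a).
Qed.

End G1Nearring.

Theorem lemma8 (p : nat) (hp : prime p) (hodd : odd p) :
  [/\ (forall i : nat, (0 < i < p)%N ->
         G1_local_nearring (fun x : G1 p => c1 x ^+ i) (fun _ => 0)),
      G1_local_nearring (fun _ : G1 p => 1) (fun _ => 0) &
      G1_local_nearring (fun x : G1 p => c1 x ^+ 2) (fun x => c1 x * c2 x)].
Proof.
have local_of := G1_local_nearring_criterion hp hodd.
split.
- move=> i _; apply: local_of.
  + by move=> x y; apply: exprMn.
  + by move=> x y; rewrite mul0r mulr0 addr0.
  + exact: expr1n.
  + by [].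
  + by move=> x; apply: expf_neq0.
- apply: local_of => //.
  + by move=> x y; rewrite mulr1.
  + by move=> x y; rewrite mul0r mulr0 addr0.
- apply: local_of.
  + by move=> x y; apply: exprMn.
  + by move=> x y; rewrite /c1 /c2 /=; ring.
  + exact: expr1n.
  + exact: mul1r.
  + by move=> x; apply: expf_neq0.
Qed.
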